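(* Let $Q_1,\dots,Q_4$ be quaternion division algebras over $F$ with $g_{ij},h_i,d\ge2$ for all indices, and $X=\prod_{i=1}^4\mathrm{SB}(Q_i)$. Let $1\le m\le3$, and let $i,j,k,l$ be such that $\{i,j,k,l\}=\{1,2,3,4\}$. Then: (1) If $d=2$ then $2\sum_{1\le p<q\le4}y_py_q\in\mathrm{Im}(\mathrm{res}^{2/3})$. If $h_l=2$ then $2(y_iy_j+y_iy_k+y_jy_k)\in\mathrm{Im}(\mathrm{res}^{2/3})$. (2) If $g_{ij}=2$ then $4y_iy_jy_k,4y_iy_jy_l\in\mathrm{Im}(\mathrm{res}^{3/4})$. If $h_l=2$ then $4y_iy_jy_k$ and $-4y_iy_jy_k+4\sum_{1\le p<q<r\le4}y_py_qy_r$ lie in $\mathrm{Im}(\mathrm{res}^{3/4})$. If $g_{ij}=g_{ik}=2$ then $4y_iy_jy_k,4y_iy_jy_l,4y_iy_ky_l\in\mathrm{Im}(\mathrm{res}^{3/4})$. If $d=2$, or $|G|\ge4$, or $|G\cap J_m|=2$ for some $m$, or $|G\cap K_i|=3$ for some $i$, then $4y_py_qy_r\in\mathrm{Im}(\mathrm{res}^{3/4})$ for all $1\le p<q<r\le4$. (3) If $d\in\{2,4\}$, or $|G|\ge1$, or $|H_2|\ge1$, then $8y_1y_2y_3y_4\in\Gamma^4(X)$. If $|G\cap J_m|=2$ for some $m$, then $4y_1y_2y_3y_4\in\Gamma^4(X)$.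
   Context: Let $Q_1,\dots,Q_4$ be quaternion algebras over a field $F$, $X=\prod_{i=1}^4\mathrm{SB}(Q_i)$, and $E$ a splitting field. Then $K(X_E)=\mathbb Z[x_1,\dots,x_4]/((x_1-1)^2,\dots,(x_4-1)^2)$, where $x_i$ is the pullback of the class of the tautological line bundle on the $i$-th projective line, and the restriction $K(X)\to K(X_E)$ is injective; we identify $K(X)$ with its image, which has $\mathbb Z$-basis $\{\operatorname{ind}(Q_1^{\otimes i_1}\otimes\cdots\otimes Q_4^{\otimes i_4})x_1^{i_1}\cdots x_4^{i_4}:0\le i_j\le1\}$. Put $y_i=x_i-1$. The gamma filtration $\Gamma^d$ is generated by products $\gamma_{d_1}(x_1)\cdots\gamma_{d_r}(x_r)$ with $x_s$ of rank $0$ and $\sum d_s\ge d$; $\Gamma^d(X_E)$ is spanned by monomials in the $y_i$ of degree $\ge d$, and $\mathrm{res}^{d/d+1}:\Gamma^{d/d+1}(X)\to\Gamma^{d/d+1}(X_E)$ is the induced map on quotients; a homogeneous degree-$d$ polynomial in the $y_i$ is said to lie in $\mathrm{Im}(\mathrm{res}^{d/d+1})$ if its class in $\Gamma^{d/d+1}(X_E)$ does. Notation: $g_{ij}=\operatorname{ind}(Q_i\otimes Q_j)$; $h_i=\operatorname{ind}(Q_j\otimes Q_k\otimes Q_l)$ where $\{i,j,k,l\}=\{1,2,3,4\}$; $d=\operatorname{ind}(Q_1\otimes Q_2\otimes Q_3\otimes Q_4)$; $H_m=\{i:h_i=m\}$; $J=\{12,13,14,23,24,34\}$ the set of index pairs;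 $J_1=\{12,34\}$, $J_2=\{13,24\}$, $J_3=\{14,23\}$; $K_i=\{jk,jl,kl\}$ where $\{j,k,l\}=\{1,2,3,4\}\setminus\{i\}$; $G=\{ij\in J: g_{ij}=2\}$. *)

(* Concrete model of K(X_E) = Z[x_1..x_4]/((x_i-1)^2)
   with its lambda/gamma structure, K(X) as the sublattice spanned by
   ind(Q_I) x^I, and the gamma filtration. Indices are 0-based: 'I_4. *)
From HB Require Import structures.
From mathcomp Require Import all_boot all_order all_algebra.
Set Implicit Arguments. Unset Strict Implicit. Unset Printing Implicit Defensive.
Import Order.TTheory GRing.Theory Num.Theory.
Local Open Scope ring_scope.

(* An element of K(X_E), written in the monomial basis y^S (S subset of
   {0,1,2,3}), where y_i = x_i - 1 and y_i^2 = 0. *)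
Definition KE := {ffun {set 'I_4} -> int}.

Definition ymon (S : {set 'I_4}) : KE := [ffun T : {set 'I_4} => ((T == S) : nat)%:Z].
(* the monomial x^I = prod_{i in I} (1 + y_i) *)
Definition xmon (I : {set 'I_4}) : KE := [ffun T : {set 'I_4} => ((T \subset I) : nat)%:Z].

Definition kone : KE := ymon set0.
(* multiplication in Z[y]/(y_i^2) *)
Definition kmul (f g : KE) : KE :=
  [ffun S : {set 'I_4} => \sum_(A : {set 'I_4} | A \subset S) f A * g (S :\: A)].
Definition kpow (u : KE) (n : nat) : KE := iter n (kmul u) kone.

(* rank = value at y = 0 (i.e. x = 1) *)
Definition rank (f : KE) : int := f set0.

(* coefficient of x^A when f is written in the Z-basis {x^I} *)
Definition xcoef (f : KE) (A : {set 'I_4}) : int :=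
  \sum_(S : {set 'I_4} | A \subset S) f S * (-1) ^+ #|S :\: A|.

Definition PS := nat -> KE.
Definition sone : PS := fun n => if n == 0%N then kone else 0.
Definition smul (p q : PS) : PS :=
  fun n => \sum_(k < n.+1) kmul (p k) (q (n - k)%N).
Definition spow (p : PS) (n : nat) : PS := iter n (smul p) sone.
(* 1 + u t  and its inverse  sum_k (-u)^k t^k *)
Definition slin (u : KE) : PS :=
  fun n => if n == 0%N then kone else if n == 1%N then u else 0.
Definition slinv (u : KE) : PS := fun n => kpow u n *~ ((-1) ^+ n).
Definition sfactor (u : KE) (m : int) : PS :=
  match m with Posz n => spow (slin u) n | Negz n => spow (slinv u) n.+1 end.

(* gamma_t(f) for a rank-0 element f = sum_I n_I x^I (the x^I being classes
   of line bundles):  gamma_t(f) = prod_I (1 + (x^I - 1) t)^{n_I}. *)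
Definition gammaT (f : KE) : PS :=
  foldr (fun I acc => smul (sfactor (xmon I - kone) (xcoef f I)) acc) sone
        (enum [set: {set 'I_4}]).
Definition gamma (n : nat) (f : KE) : KE := gammaT f n.

(* Index data: ind I = ind(tensor_{i in I} Q_i). *)
Definition gidx (ind : {set 'I_4} -> nat) (i j : 'I_4) : nat := ind [set i; j].
Definition hidx (ind : {set 'I_4} -> nat) (i : 'I_4) : nat := ind (~: [set i]).
Definition didx (ind : {set 'I_4} -> nat) : nat := ind [set: 'I_4].

(* K(X), identified with its image in K(X_E) *)
Definition inKX (ind : {set 'I_4} -> nat) (f : KE) : Prop :=
  exists c : {set 'I_4} -> int,
    f = \sum_(I : {set 'I_4}) xmon I *~ (c I * (ind I)%:Z).

Definition gprod (s : seq (nat * KE)) : KE :=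
  foldr (fun p acc => kmul (gamma p.1 p.2) acc) kone s.

(* Gamma^d(X) (as a subgroup of K(X_E)): Z-span of the products
   gamma_{d_1}(a_1)...gamma_{d_r}(a_r), a_s in K(X) of rank 0, sum d_s >= d *)
Definition GammaX (ind : {set 'I_4} -> nat) (d : nat) (z : KE) : Prop :=
  exists gs : seq (int * seq (nat * KE)),
    (forall g, g \in gs ->
       (forall p, p \in g.2 -> inKX ind p.2 /\ rank p.2 = 0)
       /\ (d <= sumn (map fst g.2))%N)
    /\ z = \sum_(g <- gs) gprod g.2 *~ g.1.

(* a homogeneous degree-d polynomial p lies in Im(res^{d/d+1}):
   some z in Gamma^d(X) agrees with p modulo Gamma^{d+1}(X_E) =
   span of monomials of degree >= d+1 *)
Definition inImRes (ind : {set 'I_4} -> nat) (d : nat) (p : KE) : Prop :=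
  exists z, GammaX ind d z /\ forall S : {set 'I_4}, (#|S| <= d)%N -> z S = p S.

(* G = {ij : g_ij = 2}, as a set of 2-element subsets *)
Definition Gset (ind : {set 'I_4} -> nat) : {set {set 'I_4}} :=
  [set S : {set 'I_4} | (#|S| == 2)%N && (ind S == 2%N)].
Definition Hset (ind : {set 'I_4} -> nat) (m : nat) : {set 'I_4} :=
  [set i | hidx ind i == m].
(* J_{m+1} for m : 'I_3: {{0, m+1}, complement}, i.e. J_1={12,34}, ... *)
Definition Jset (m : 'I_3) : {set {set 'I_4}} :=
  [set [set ord0; lift ord0 m]; ~: [set ord0; lift ord0 m]].
Definition Kset (i : 'I_4) : {set {set 'I_4}} :=
  [set S : {set 'I_4} | (#|S| == 2)%N && (i \notin S)].

(* Standing hypotheses on indices of tensor products of quaternion division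
   algebras (consequences valid over every field): ind of the trivial tensor
   product is 1, each Q_i is division (index 2), and since
   [Q_S (x) Q_T] = [Q_{S delta T}] in Br(F), ind(S delta T) | ind S * ind T. *)
Definition quat_indices (ind : {set 'I_4} -> nat) : Prop :=
  [/\ ind set0 = 1%N,
      forall i, ind [set i] = 2%N &
      forall S T : {set 'I_4}, (ind ((S :\: T) :|: (T :\: S)) %| ind S * ind T)%N].

From HB Require Import structures.
From mathcomp Require Import all_boot all_order all_algebra.
From Stdlib Require Import FunctionalExtensionality.
Import Order.TTheory GRing.Theory Num.Theory.
Local Open Scope ring_scope.
Set Implicit Arguments. Unset Strict Implicit. Unset Printing Implicit Defensive.

(* Every element occurring in the statement is exhibited explicitly as a
   Z-combination of products gamma_{n_1}(a_1) ... gamma_{n_r}(a_r) whose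
   arguments are the rank-zero classes  a = ind(Q_I) (x^I - 1)  of K(X), where
   x^I = prod_{i in I} x_i is the class of a line bundle on X_E.  For such a
   class gamma_t(a) = (1 + (x^I - 1) t)^{ind(Q_I)}, so every product is an
   explicit element of K(X_E) = Z[y_1..y_4]/(y_i^2).  Of the index data only
   ind(F) = 1 and ind(Q_i) = 2 are used. *)

(* Subsets of 'I_4 as 4-bit numbers: bit t of m records whether t is in the set.
   The decoding to_set is locked, so that unification never unfolds it. *)
Definition mbit (t m : nat) : bool := odd (m %/ 2 ^ t).
Definition to_set : nat -> {set 'I_4} := locked (fun m => [set x : 'I_4 | mbit x m]).
Lemma in_to_set m x : (x \in to_set m) = mbit x m. Proof. by rewrite /to_set -lock inE. Qed.

Definition o0 : 'I_4 := @Ordinal 4 0 isT.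
Definition o1 : 'I_4 := @Ordinal 4 1 isT.
Definition o2 : 'I_4 := @Ordinal 4 2 isT.
Definition o3 : 'I_4 := @Ordinal 4 3 isT.

Lemma ord4_cases (x : 'I_4) : [\/ x = o0, x = o1, x = o2 | x = o3].
Proof.
case: x => [[|[|[|[|//]]]] H]; [constructor 1|constructor 2|constructor 3|constructor 4];
  exact: val_inj.
Qed.

Definition mpack (c0 c1 c2 c3 : bool) : nat := (c0 + c1.*2 + 4 * c2 + 8 * c3)%N.
Definition to_mask (S : {set 'I_4}) : nat := mpack (o0 \in S) (o1 \in S) (o2 \in S) (o3 \in S).

Lemma mbit_mpack c0 c1 c2 c3 :
  [/\ mbit 0 (mpack c0 c1 c2 c3) = c0, mbit 1 (mpack c0 c1 c2 c3) = c1,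
      mbit 2 (mpack c0 c1 c2 c3) = c2 & mbit 3 (mpack c0 c1 c2 c3) = c3].
Proof. by case: c0; case: c1; case: c2; case: c3. Qed.

Lemma mpack_lt c0 c1 c2 c3 : (mpack c0 c1 c2 c3 < 16)%N.
Proof. by case: c0; case: c1; case: c2; case: c3. Qed.

Lemma in_to_set_mpack c0 c1 c2 c3 (x : 'I_4) :
  x \in to_set (mpack c0 c1 c2 c3) = [:: c0; c1; c2; c3]`_x.
Proof.
have [b0 b1 b2 b3] := mbit_mpack c0 c1 c2 c3.
by rewrite in_to_set; case: (ord4_cases x) => ->.
Qed.

Lemma to_maskK S : to_set (to_mask S) = S.
Proof. by apply/setP => x; rewrite in_to_set_mpack; case: (ord4_cases x) => ->. Qed.

Lemma to_mask_lt S : (to_mask S < 16)%N.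
Proof. exact: mpack_lt. Qed.

Lemma to_setK m : (m < 16)%N -> to_mask (to_set m) = m.
Proof. by rewrite /to_mask !in_to_set /=; do 16?[case: m => [|m] //]. Qed.

Lemma to_set_inj m n : (m < 16)%N -> (n < 16)%N -> to_set m = to_set n -> m = n.
Proof. by move=> ltm ltn E; rewrite -(to_setK ltm) E to_setK. Qed.

Definition mcard (m : nat) : nat := (mbit 0 m + mbit 1 m + mbit 2 m + mbit 3 m)%N.
Definition msub (a b : nat) : bool :=
  [&& mbit 0 a ==> mbit 0 b, mbit 1 a ==> mbit 1 b, mbit 2 a ==> mbit 2 b &
      mbit 3 a ==> mbit 3 b].
Definition mdiff (a b : nat) : nat :=
  mpack (mbit 0 a && ~~ mbit 0 b) (mbit 1 a && ~~ mbit 1 b)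
        (mbit 2 a && ~~ mbit 2 b) (mbit 3 a && ~~ mbit 3 b).
Definition meq (a b : nat) : bool := msub a b && msub b a.

Lemma card_to_set m : #|to_set m| = mcard m.
Proof.
rewrite -sum1_card big_mkcond /= !big_ord_recr big_ord0 /= !in_to_set /mcard /=.
by case: (mbit 0 m); case: (mbit 1 m); case: (mbit 2 m); case: (mbit 3 m).
Qed.

Lemma subset_to_set a b : (to_set a \subset to_set b) = msub a b.
Proof.
apply/subsetP/and4P => [H|[h0 h1 h2 h3] x].
  by split; apply/implyP => Hx;
    [have := H o0|have := H o1|have := H o2|have := H o3]; rewrite !in_to_set; apply.
by rewrite !in_to_set; case: (ord4_cases x) => ->; apply/implyP.
Qed.

Lemma setD_to_set a b : to_set a :\: to_set b = to_set (mdiff a b).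
Proof.
apply/setP => x; rewrite in_to_set_mpack inE !in_to_set.
by case: (ord4_cases x) => ->; rewrite andbC.
Qed.

Lemma eq_to_set a b : (to_set a == to_set b) = meq a b.
Proof. by rewrite eqEsubset !subset_to_set. Qed.

Lemma to_set0 : to_set 0 = set0.
Proof. by apply/setP => x; rewrite in_to_set inE /mbit div0n. Qed.

(* Sums over an explicit list of naturals, which evaluate by computation. *)
Definition sum_list (s : seq nat) (F : nat -> int) : int := foldr (fun a acc => F a + acc) 0 s.
Definition sum_masks (F : nat -> int) : int := sum_list (iota 0 16) F.

Lemma eq_sum_list s (F1 F2 : nat -> int) :
  (forall a, a \in s -> F1 a = F2 a) -> sum_list s F1 = sum_list s F2.
Proof.
elim: s => //= a s IH E; rewrite E ?mem_head // IH // => b bs.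
by apply: E; rewrite inE bs orbT.
Qed.

Lemma sum_list_mull s c (F : nat -> int) : sum_list s (fun a => c * F a) = c * sum_list s F.
Proof. by elim: s => /= [|a s ->]; rewrite ?mulr0 ?mulrDr. Qed.

Lemma big_ord_sum_list n (F : nat -> int) : \sum_(k < n) F k = sum_list (iota 0 n) F.
Proof.
rewrite -(big_mkord (fun _ => true)) unlock /index_iota subn0.
by elim: (iota 0 n) => //= a s ->.
Qed.

Lemma big_sets_masks (F : {set 'I_4} -> int) :
  \sum_(S : {set 'I_4}) F S = sum_masks (fun a => F (to_set a)).
Proof.
rewrite (reindex (fun m : 'I_16 => to_set m)) /=; last first.
  exists (fun S => Ordinal (to_mask_lt S)) => [m _|S _]; last exact: to_maskK.
  by apply: val_inj; rewrite /= to_setK.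
by rewrite (big_ord_sum_list 16 (fun a => F (to_set a))).
Qed.

Lemma card_sets_masks (A : {set {set 'I_4}}) :
  #|A|%:Z = sum_masks (fun s => ((to_set s \in A) : nat)%:Z).
Proof.
rewrite -(big_sets_masks (fun S => ((S \in A) : nat)%:Z)).
rewrite (eq_bigr (fun S => if S \in A then 1 else 0)); last by move=> S _; case: (S \in A).
by rewrite -big_mkcond sumr_const natz.
Qed.

(* An element f of K(X_E) is represented by the table of its 16 coordinates
   f(y^S), listed by the mask of S. *)
Definition table := seq int.
Definition tabulate (F : nat -> int) : table := map F (iota 0 16).
Definition tentry (t : table) (m : nat) : int := nth 0 t m.
Definition Encodes (f : KE) (t : table) :=
  forall m, (m < 16)%N -> f (to_set m) = tentry t m.

Lemma tentry_tabulate F m : (m < 16)%N -> tentry (tabulate F) m = F m.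
Proof. by move=> H; rewrite /tentry (nth_map 0%N) ?size_iota // nth_iota. Qed.

Lemma Encodes_inj f g t : Encodes f t -> Encodes g t -> f = g.
Proof.
move=> Hf Hg; apply/ffunP => S; rewrite -(to_maskK S).
by rewrite Hf ?Hg // to_mask_lt.
Qed.

Definition tmul (s t : table) : table :=
  tabulate (fun m => sum_masks (fun a =>
    if msub a m then tentry s a * tentry t (mdiff m a) else 0)).
Definition tadd (s t : table) : table := tabulate (fun m => tentry s m + tentry t m).
Definition topp (s : table) : table := tabulate (fun m => - tentry s m).
Definition tscale (s : table) (z : int) : table := tabulate (fun m => tentry s m * z).
Definition tzero : table := tabulate (fun _ => 0).
Definition tymon (a : nat) : table := tabulate (fun m => (meq m a : nat)%:Z).
Definition txmon (a : nat) : table := tabulate (fun m => (msub m a : nat)%:Z).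

Lemma Encodes_kmul f g s t : Encodes f s -> Encodes g t -> Encodes (kmul f g) (tmul s t).
Proof.
move=> Hf Hg m Hm; rewrite tentry_tabulate // ffunE big_mkcond big_sets_masks.
apply: eq_sum_list => a; rewrite mem_iota add0n => Ha.
rewrite subset_to_set setD_to_set; case: (msub a m) => //.
by rewrite Hf // Hg // /mdiff mpack_lt.
Qed.

Lemma Encodes_add f g s t : Encodes f s -> Encodes g t -> Encodes (f + g) (tadd s t).
Proof. by move=> Hf Hg m Hm; rewrite tentry_tabulate // !ffunE Hf // Hg. Qed.

Lemma Encodes_opp f s : Encodes f s -> Encodes (- f) (topp s).
Proof. by move=> Hf m Hm; rewrite tentry_tabulate // !ffunE Hf. Qed.

Lemma Encodes_scale f s z : Encodes f s -> Encodes (f *~ z) (tscale s z).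
Proof. by move=> Hf m Hm; rewrite tentry_tabulate // ffunMzE Hf // -mulrzr intz. Qed.

Lemma Encodes_zero : Encodes 0 tzero.
Proof. by move=> m Hm; rewrite tentry_tabulate // ffunE. Qed.

Lemma Encodes_ymon a : Encodes (ymon (to_set a)) (tymon a).
Proof. by move=> m Hm; rewrite tentry_tabulate // ffunE eq_to_set. Qed.

Lemma Encodes_xmon a : Encodes (xmon (to_set a)) (txmon a).
Proof. by move=> m Hm; rewrite tentry_tabulate // ffunE subset_to_set. Qed.

Lemma Encodes_kone : Encodes kone (tymon 0).
Proof. by rewrite /kone -to_set0; apply: Encodes_ymon. Qed.

Lemma Encodes_sum n (F : nat -> KE) (G : nat -> table) :
  (forall k, (k < n)%N -> Encodes (F k) (G k)) ->
  Encodes (\sum_(k < n) F k) (foldr (fun k acc => tadd (G k) acc) tzero (iota 0 n)).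
Proof.
move=> H m Hm; rewrite sum_ffunE (big_ord_sum_list n (fun k => F k (to_set m))).
have: forall k, k \in iota 0 n -> Encodes (F k) (G k).
  by move=> k; rewrite mem_iota add0n; apply: H.
elim: (iota 0 n) => /= [|a s IH] Hs; first by rewrite tentry_tabulate.
rewrite tentry_tabulate // IH; last by move=> k ks; apply: Hs; rewrite inE ks orbT.
by rewrite -(Hs a (mem_head _ _)).
Qed.

Definition EncodesPS (p : PS) (P : nat -> table) := forall n, Encodes (p n) (P n).

Definition tsmul (P Q : nat -> table) (n : nat) : table :=
  foldr (fun k acc => tadd (tmul (P k) (Q (n - k)%N)) acc) tzero (iota 0 n.+1).
Definition tsone (n : nat) : table := if n == 0%N then tymon 0 else tzero.
Definition tslin (t : table) (n : nat) : table :=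
  if n == 0%N then tymon 0 else if n == 1%N then t else tzero.
Definition tspow (P : nat -> table) (c : nat) : nat -> table := iter c (tsmul P) tsone.

Lemma EncodesPS_smul p q P Q : EncodesPS p P -> EncodesPS q Q -> EncodesPS (smul p q) (tsmul P Q).
Proof.
move=> Hp Hq n.
apply: (Encodes_sum (F := fun k => kmul (p k) (q (n - k)%N))) => k _.
exact: Encodes_kmul.
Qed.

Lemma EncodesPS_sone : EncodesPS sone tsone.
Proof. by move=> [|n]; [exact: Encodes_kone | exact: Encodes_zero]. Qed.

Lemma EncodesPS_slin u t : Encodes u t -> EncodesPS (slin u) (tslin t).
Proof. by move=> H [|[|n]]; [exact: Encodes_kone | exact: H | exact: Encodes_zero]. Qed.

Lemma EncodesPS_spow p P c : EncodesPS p P -> EncodesPS (spow p c) (tspow P c).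
Proof.
move=> H; elim: c => [|c IH]; first exact: EncodesPS_sone.
exact: EncodesPS_smul.
Qed.

Lemma kone_set0 : kone set0 = 1. Proof. by rewrite ffunE eqxx. Qed.
Lemma kone_neq0 A : A != set0 -> kone A = 0. Proof. by rewrite ffunE => /negbTE ->. Qed.

Lemma kmul1f f : kmul kone f = f.
Proof.
apply/ffunP => S; rewrite ffunE (bigD1 set0) ?sub0set //= kone_set0 mul1r setD0.
by rewrite big1 ?addr0 // => A /andP [_ HA]; rewrite kone_neq0 // mul0r.
Qed.

Lemma kmulf1 f : kmul f kone = f.
Proof.
apply/ffunP => S; rewrite ffunE (bigD1 S) ?subxx //= setDv kone_set0 mulr1.
rewrite big1 ?addr0 // => A /andP [sAS nAS]; rewrite kone_neq0 ?mulr0 //.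
by rewrite setD_eq0; apply: contra nAS => sSA; rewrite eqEsubset sAS sSA.
Qed.

Lemma kmul0f f : kmul 0 f = 0.
Proof. by apply/ffunP => S; rewrite !ffunE big1 // => A _; rewrite ffunE mul0r. Qed.

Lemma kmulf0 f : kmul f 0 = 0.
Proof. by apply/ffunP => S; rewrite !ffunE big1 // => A _; rewrite ffunE mulr0. Qed.

Lemma smul1s q : smul sone q = q.
Proof.
apply: functional_extensionality => n; rewrite /smul big_ord_recl /= subn0 kmul1f.
by rewrite big1 ?addr0 // => k _; rewrite kmul0f.
Qed.

Lemma smuls1 p : smul p sone = p.
Proof.
apply: functional_extensionality => n; rewrite /smul big_ord_recr /= subnn kmulf1.
rewrite big1 ?add0r // => k _; rewrite /sone.
by rewrite subn_eq0 leqNgt /= (ltn_ord k) kmulf0.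
Qed.

Lemma spow_sone c : spow sone c = sone.
Proof. by elim: c => //= c IH; rewrite IH smul1s. Qed.

Lemma slinv0 : slinv 0 = sone.
Proof.
apply: functional_extensionality => -[|n]; first by rewrite /slinv /= expr0 mulr1z.
by rewrite /slinv /= kmul0f mul0rz.
Qed.

Lemma foldr_smul_none (F : {set 'I_4} -> PS) I0 s :
  I0 \notin s -> (forall I, I != I0 -> F I = sone) ->
  foldr (fun I acc => smul (F I) acc) sone s = sone.
Proof.
move=> Hs HF; elim: s Hs => //= a s IH; rewrite inE negb_or => /andP [ha hs].
by rewrite HF 1?eq_sym // smul1s IH.
Qed.

Lemma foldr_smul_single (F : {set 'I_4} -> PS) I0 s :
  uniq s -> I0 \in s -> (forall I, I != I0 -> F I = sone) ->
  foldr (fun I acc => smul (F I) acc) sone s = F I0.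
Proof.
move=> Hu Hs HF; elim: s Hu Hs => //= a s IH /andP [ha hu].
rewrite inE; case: (eqVneq I0 a) => [e|ne] /= H.
  by subst a; rewrite (foldr_smul_none ha HF) smuls1.
by rewrite HF 1?eq_sym // smul1s IH.
Qed.

(* The rank-zero class c (x^I - 1) of K(X), with c = ind(Q_I). *)
Definition lineclass (c : nat) (I : {set 'I_4}) : KE := (xmon I - kone) *~ c%:Z.

Lemma xmon0 : xmon set0 = kone.
Proof. by apply/ffunP => S; rewrite !ffunE subset0. Qed.

Lemma rank_lineclass c I : rank (lineclass c I) = 0.
Proof. by rewrite /rank /lineclass ffunMzE !ffunE sub0set eqxx subrr mul0rz. Qed.

Lemma inKX_lineclass ind I : ind set0 = 1%N -> I != set0 -> inKX ind (lineclass (ind I) I).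
Proof.
move=> H0 nI.
exists (fun J => if J == I then 1 else if J == set0 then - (ind I)%:Z else 0).
rewrite (bigD1 I) //= eqxx mul1r (bigD1 set0) //=; last by rewrite eq_sym.
rewrite eq_sym (negbTE nI) eqxx H0 mulr1 big1; last first.
  by move=> J /andP [/negbTE -> /negbTE ->]; rewrite mul0r mulr0z.
by rewrite addr0 xmon0 /lineclass mulrzBl mulrNz.
Qed.

(* Moebius inversion on the subsets of 'I_4: the x-coordinates of x^I - 1 are
   those of the basis vector x^I minus those of x^0 = 1.  Checked on masks. *)
Definition line_coef (i s : nat) : int := (msub s i : nat)%:Z - (meq s 0 : nat)%:Z.
Definition moebius_line_check := all (fun i => all (fun j => (i == 0%N) ||
  (sum_masks (fun s => if msub j s then line_coef i s * (-1) ^+ mcard (mdiff s j) else 0)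
    == (meq j i : nat)%:Z - (meq j 0 : nat)%:Z)) (iota 0 16)) (iota 0 16).
Lemma moebius_line_checkP : moebius_line_check. Proof. by vm_compute. Qed.

Lemma xcoef_lineclass c I J : I != set0 ->
  xcoef (lineclass c I) J = c%:Z * ((J == I : nat)%:Z - (J == set0 : nat)%:Z).
Proof.
move=> nI.
have i0 : to_mask I != 0%N by apply: contra nI => /eqP E; rewrite -(to_maskK I) E to_set0.
rewrite -(to_maskK I) -(to_maskK J) -to_set0 !eq_to_set.
move: (to_mask_lt I) (to_mask_lt J) i0; move: (to_mask I) (to_mask J) => i j lt_i lt_j i0.
rewrite /xcoef big_mkcond big_sets_masks /sum_masks.
rewrite (@eq_sum_list _ _ (fun s => c%:Z *
    (if msub j s then line_coef i s * (-1) ^+ mcard (mdiff s j) else 0))); last first.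
  move=> s _; rewrite subset_to_set setD_to_set card_to_set.
  case: (msub j s); rewrite ?mulr0 //= /lineclass ffunMzE !ffunE.
  by rewrite subset_to_set -to_set0 eq_to_set -mulrzr intz mulrA [c%:Z * _]mulrC.
rewrite sum_list_mull; congr (_ * _); apply/eqP.
have /allP/(_ i) := moebius_line_checkP; rewrite mem_iota => /(_ lt_i)/allP/(_ j).
by rewrite mem_iota (negbTE i0) => /(_ lt_j).
Qed.

Lemma gamma_lineclass c I n : I != set0 -> (0 < c)%N ->
  gamma n (lineclass c I) = spow (slin (xmon I - kone)) c n.
Proof.
move=> nI c0; rewrite /gamma /gammaT.
rewrite (foldr_smul_single (I0 := I)) ?enum_uniq ?mem_enum ?inE //.
  by rewrite xcoef_lineclass // eqxx (negbTE nI) subr0 mulr1.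
move=> J nJ; rewrite xcoef_lineclass // (negbTE nJ) sub0r.
case: (eqVneq J set0) => [->|_]; last by rewrite mulr0.
rewrite xmon0 subrr mulrN1; case: c c0 => // c _.
by rewrite -NegzE /= slinv0 smul1s spow_sone.
Qed.

(* A factor (n, c, i) stands for gamma_n(c (x^I - 1)), where I has mask i. *)
Definition factor := (nat * nat * nat)%type.
Definition fdeg (a : factor) : nat := a.1.1.
Definition fmult (a : factor) : nat := a.1.2.
Definition fmask (a : factor) : nat := a.2.
Definition factor_val (a : factor) : nat * KE :=
  (fdeg a, lineclass (fmult a) (to_set (fmask a))).
Definition valid_factor (a : factor) : bool := (0 < fmask a < 16)%N && (0 < fmult a)%N.
Definition tfactor (a : factor) : table :=
  tspow (tslin (tadd (txmon (fmask a)) (topp (tymon 0)))) (fmult a) (fdeg a).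

Lemma Encodes_factor a : valid_factor a ->
  Encodes (gamma (fdeg a) (lineclass (fmult a) (to_set (fmask a)))) (tfactor a).
Proof.
case/andP=> /andP [i0 i16] c0; rewrite gamma_lineclass //; last first.
  by rewrite -to_set0; apply: contraTneq i0 => /to_set_inj-> //.
apply: EncodesPS_spow; apply: EncodesPS_slin; apply: Encodes_add; first exact: Encodes_xmon.
apply: Encodes_opp; exact: Encodes_kone.
Qed.

(* A certificate is a list of signed products of factors; its value is the
   corresponding Z-combination of products of gammas. *)
Definition cert := seq (int * seq factor).
Definition cert_gens (w : cert) : seq (int * seq (nat * KE)) :=
  map (fun g => (g.1, map factor_val g.2)) w.
Definition cert_val (w : cert) : KE := \sum_(g <- cert_gens w) gprod g.2 *~ g.1.
Definition cert_factors (w : cert) : seq factor := flatten (map snd w).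

Definition tgprod (l : seq factor) : table :=
  foldr (fun a acc => tmul (tfactor a) acc) (tymon 0) l.
Definition tcert (w : cert) : table :=
  foldr (fun g acc => tadd (tscale (tgprod g.2) g.1) acc) tzero w.

Lemma Encodes_gprod l : all valid_factor l -> Encodes (gprod (map factor_val l)) (tgprod l).
Proof.
elim: l => [|a l IH] /=; first by move=> _; exact: Encodes_kone.
by case/andP => Ha Hl; apply: Encodes_kmul; [exact: Encodes_factor | exact: IH].
Qed.

Lemma Encodes_cert w : all valid_factor (cert_factors w) -> Encodes (cert_val w) (tcert w).
Proof.
rewrite /cert_val; elim: w => [|g w IH] /=.
  by move=> _; rewrite big_nil; exact: Encodes_zero.
rewrite /cert_factors /= all_cat => /andP [Hg Hw]; rewrite big_cons /=.
by apply: Encodes_add; [apply: Encodes_scale; exact: Encodes_gprod | exact: IH].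
Qed.

(* The multiplicities must be the indices ind(Q_I), so that the arguments of
   the gammas lie in K(X); and each product must have total degree >= d. *)
Definition cert_indices (ind : {set 'I_4} -> nat) (w : cert) : Prop :=
  foldr (fun a P => ind (to_set (fmask a)) = fmult a /\ P) True (cert_factors w).
Definition cert_degree (d : nat) (w : cert) : bool :=
  all (fun g => d <= sumn (map fdeg g.2))%N w.

Lemma cert_indicesP ind w a : cert_indices ind w -> a \in cert_factors w ->
  ind (to_set (fmask a)) = fmult a.
Proof.
rewrite /cert_indices; elim: (cert_factors w) => [|b s IH] //= [Hb Hs].
by rewrite inE => /orP [/eqP -> //|]; exact: IH.
Qed.

Lemma GammaX_cert_val ind d w : ind set0 = 1%N -> cert_indices ind w ->
  all valid_factor (cert_factors w) -> cert_degree d w -> GammaX ind d (cert_val w).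
Proof.
move=> H0 Hi Hv Hd; exists (cert_gens w); split => // g /mapP [g0 g0w ->] /=; split.
  move=> p /mapP [a ag0 ->] /=; split; last exact: rank_lineclass.
  have aw : a \in cert_factors w by apply/flattenP; exists g0.2 => //; exact: map_f.
  case/andP: (allP Hv a aw) => /andP [a0 a16] _.
  rewrite -(cert_indicesP Hi aw); apply: inKX_lineclass => //.
  by rewrite -to_set0; apply: contraTneq a0 => /to_set_inj-> //.
by rewrite -map_comp; exact: (allP Hd).
Qed.

Definition cert_low_ok (d : nat) (w : cert) (t : table) : bool :=
  let tw := tcert w in
  [&& all valid_factor (cert_factors w), cert_degree d w &
      all (fun m => (mcard m <= d)%N ==> (tentry tw m == tentry t m)) (iota 0 16)].
Definition cert_exact_ok (d : nat) (w : cert) (t : table) : bool :=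
  let tw := tcert w in
  [&& all valid_factor (cert_factors w), cert_degree d w &
      all (fun m => tentry tw m == tentry t m) (iota 0 16)].

Lemma inImRes_cert ind d w p t : ind set0 = 1%N -> cert_indices ind w ->
  Encodes p t -> cert_low_ok d w t -> inImRes ind d p.
Proof.
move=> H0 Hi Hp /and3P [Hv Hd Hc]; exists (cert_val w); split.
  exact: GammaX_cert_val.
move=> S; rewrite -(to_maskK S) card_to_set => HS.
have Hm := to_mask_lt S.
rewrite (Encodes_cert Hv Hm) Hp //; apply/eqP.
by have := allP Hc _ (_ : to_mask S \in iota 0 16); rewrite HS; apply; rewrite mem_iota.
Qed.

Lemma GammaX_cert ind d w z t : ind set0 = 1%N -> cert_indices ind w ->
  Encodes z t -> cert_exact_ok d w t -> GammaX ind d z.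
Proof.
move=> H0 Hi Hz /and3P [Hv Hd Hc].
suff -> : z = cert_val w by exact: GammaX_cert_val.
apply: (Encodes_inj Hz) => m Hm; rewrite (Encodes_cert Hv Hm).
by apply/eqP; apply: (allP Hc); rewrite mem_iota.
Qed.

Lemma set1_mask (x : 'I_4) : [set x] = to_set (2 ^ x).
Proof.
apply/setP => z; rewrite !inE in_to_set.
by case: (ord4_cases x) => ->; case: (ord4_cases z) => ->.
Qed.

Lemma set2_mask (x y : 'I_4) : x != y -> [set x; y] = to_set (2 ^ x + 2 ^ y).
Proof.
move=> H; apply/setP => z; rewrite !inE ?in_to_set; move: H.
by case: (ord4_cases x) => ->; case: (ord4_cases y) => ->; case: (ord4_cases z) => ->.
Qed.

Lemma set3_mask (x y u : 'I_4) : x != y -> x != u -> y != u ->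
  [set x; y; u] = to_set (2 ^ x + 2 ^ y + 2 ^ u).
Proof.
move=> H1 H2 H3; apply/setP => z; rewrite !inE ?in_to_set; move: H1 H2 H3.
by case: (ord4_cases x) => ->; case: (ord4_cases y) => ->; case: (ord4_cases u) => ->;
  case: (ord4_cases z) => ->.
Qed.

Lemma setC_mask a : (a < 16)%N -> ~: to_set a = to_set (15 - a).
Proof.
move=> Ha; apply/setP => z; rewrite !inE ?in_to_set.
by do 16?[case: a Ha => [|a] Ha //]; case: (ord4_cases z) => ->.
Qed.

Lemma setT_mask : [set: 'I_4] = to_set 15.
Proof. by apply/setP => z; rewrite !inE ?in_to_set; case: (ord4_cases z) => ->. Qed.

Lemma setC1_mask (x : 'I_4) : ~: [set x] = to_set (15 - 2 ^ x).
Proof. by rewrite set1_mask setC_mask //; case: (ord4_cases x) => ->. Qed.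

Lemma sum_ord4 (F : 'I_4 -> int) : \sum_(p < 4) F p = F o0 + F o1 + F o2 + F o3.
Proof.
rewrite !big_ord_recl big_ord0 addr0 !addrA.
by congr (_ + _ + _ + _); congr F; apply: val_inj.
Qed.

Definition tpairs : table := tabulate (fun m => ((mcard m == 2%N) : nat)%:Z).
Definition ttriples : table := tabulate (fun m => ((mcard m == 3%N) : nat)%:Z).

Lemma Encodes_pairs : Encodes (\sum_(p < 4) \sum_(q < 4 | (p < q)%N) ymon [set p; q]) tpairs.
Proof.
move=> m Hm; rewrite tentry_tabulate // sum_ffunE sum_ord4 !sum_ffunE !big_mkcond !sum_ord4 /=.
do 3 rewrite ?sum_ffunE ?big_mkcond ?sum_ord4 /=.
rewrite !ffunE !set2_mask // !eq_to_set.
by do 16?[case: m Hm => [|m] Hm //].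
Qed.

Lemma Encodes_triples : Encodes (\sum_(p < 4) \sum_(q < 4 | (p < q)%N)
  \sum_(r < 4 | (q < r)%N) ymon [set p; q; r]) ttriples.
Proof.
move=> m Hm; rewrite tentry_tabulate // sum_ffunE sum_ord4 !sum_ffunE !big_mkcond !sum_ord4 /=.
do 12 rewrite ?sum_ffunE ?big_mkcond ?sum_ord4 /=.
rewrite !ffunE !set3_mask // !eq_to_set.
by do 16?[case: m Hm => [|m] Hm //].
Qed.

Definition forall4 (P : nat -> nat -> nat -> nat -> bool) : bool :=
  all (fun i => all (fun j => all (fun k => all (fun l => P i j k l)
    (iota 0 4)) (iota 0 4)) (iota 0 4)) (iota 0 4).

Lemma forall4P P : forall4 P -> forall i j k l : 'I_4, P i j k l.
Proof.
move=> H i j k l.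
have mi (x : 'I_4) : (x : nat) \in iota 0 4 by rewrite mem_iota ltn_ord.
exact: allP (allP (allP (allP H _ (mi i)) _ (mi j)) _ (mi k)) _ (mi l).
Qed.

Lemma uniq4_val (i j k l : 'I_4) :
  uniq [:: (i : nat); (j : nat); (k : nat); (l : nat)] = uniq [:: i; j; k; l].
Proof. by rewrite -[[:: (i : nat); _; _; _]]/(map val [:: i; j; k; l]) (map_inj_uniq val_inj). Qed.

Lemma uniq4E (i j k l : 'I_4) : uniq [:: i; j; k; l] ->
  [/\ i != j, i != k, i != l & [/\ j != k, j != l & k != l]].
Proof. by rewrite /= !inE !negb_or => /and4P [/and3P [-> -> ->] /andP [-> ->] -> _]. Qed.

(* The certificates of the paper, each checked once for all index choices.  In
   the comments, a factor (n, c, I) is written gamma_n(c (x^I - 1)). *)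

(* gamma_2(2(x^T - 1)) for a set T of indices with ind(Q_T) = 2; for T = {1,2,3,4}
   it is 2 sum_{p<q} y_p y_q in degree 2. *)
Definition cert_gamma2 (t : nat) : cert := [:: (1, [:: (2, 2, t)%N])].
Lemma check_total_pairsP : cert_low_ok 2 (cert_gamma2 15) (tscale tpairs 2).
Proof. by vm_compute. Qed.

(* gamma_2(2(x_a x_b - 1)) gamma_1(2(x_c - 1)) = 4 y_a y_b y_c + higher terms. *)
Definition cert_pair_triple (a b c : nat) : cert :=
  [:: (1, [:: (2, 2, 2 ^ a + 2 ^ b)%N; (1, 2, 2 ^ c)%N])].
Definition check_pair_triple := forall4 (fun a b c _ => if (a != b) && (a != c) && (b != c) then
  cert_low_ok 3 (cert_pair_triple a b c) (tscale (tymon (2 ^ a + 2 ^ b + 2 ^ c)) 4) else true).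
Lemma check_pair_tripleP : check_pair_triple. Proof. by vm_compute. Qed.

(* For {i,j,k,l} = {1,2,3,4}: gamma_2(2(x_ix_jx_k - 1)) = 2(y_iy_j + y_iy_k + y_jy_k)
   in degree 2; its product with gamma_1(2(x_i - 1)) is 4 y_iy_jy_k in degree 3, and
   its product with gamma_1(2(x_l - 1)) is -4 y_iy_jy_k + 4 sum_{p<q<r} y_py_qy_r. *)
Definition cert_triple_lin (t i : nat) : cert := [:: (1, [:: (2, 2, t)%N; (1, 2, 2 ^ i)%N])].
Definition tpairs_in (i j k : nat) : table :=
  tscale (tadd (tadd (tymon (2 ^ i + 2 ^ j)) (tymon (2 ^ i + 2 ^ k))) (tymon (2 ^ j + 2 ^ k)))%N 2.
Definition check_triple_class := forall4 (fun i j k l => if uniq [:: i; j; k; l] then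
  [&& cert_low_ok 2 (cert_gamma2 (15 - 2 ^ l)) (tpairs_in i j k),
      cert_low_ok 3 (cert_triple_lin (15 - 2 ^ l) i) (tscale (tymon (2 ^ i + 2 ^ j + 2 ^ k)) 4) &
      cert_low_ok 3 (cert_triple_lin (15 - 2 ^ l) l)
        (tadd (tscale (tymon (2 ^ i + 2 ^ j + 2 ^ k)) (-4)) (tscale ttriples 4))] else true).
Lemma check_triple_classP : check_triple_class. Proof. by vm_compute. Qed.

(* When d = 2: sum_{s in {p,q,r}} gamma_2(2(x^{1234}-1)) gamma_1(2(x_s-1))
   minus the four products gamma_1(2(x_a-1)) gamma_1(2(x_b-1)) gamma_1(2(x_c-1)). *)
Definition cert_total_triple (p q r : nat) : cert :=
  [:: (1, [:: (2, 2, 15)%N; (1, 2, 2 ^ p)%N]); (1, [:: (2, 2, 15)%N; (1, 2, 2 ^ q)%N]);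
      (1, [:: (2, 2, 15)%N; (1, 2, 2 ^ r)%N]);
      (-1, [:: (1, 2, 1)%N; (1, 2, 2)%N; (1, 2, 4)%N]);
      (-1, [:: (1, 2, 1)%N; (1, 2, 2)%N; (1, 2, 8)%N]);
      (-1, [:: (1, 2, 1)%N; (1, 2, 4)%N; (1, 2, 8)%N]);
      (-1, [:: (1, 2, 2)%N; (1, 2, 4)%N; (1, 2, 8)%N])].
Definition check_total_triple := forall4 (fun p q r _ => if (p < q < r)%N then
  cert_low_ok 3 (cert_total_triple p q r) (tscale (tymon (2 ^ p + 2 ^ q + 2 ^ r)) 4) else true).
Lemma check_total_tripleP : check_total_triple. Proof. by vm_compute. Qed.

Definition ttop (c : int) : table := tscale (tymon 15) c.
(* d = 2: gamma_2(2(x^{1234}-1)) gamma_1(2(x_1-1)) gamma_1(2(x_2-1)). *)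
Definition cert_top_total2 : cert := [:: (1, [:: (2, 2, 15)%N; (1, 2, 1)%N; (1, 2, 2)%N])].
(* d = 4: gamma_4(4(x^{1234}-1)) minus the product of the gamma_1(2(x_i-1)). *)
Definition cert_top_total4 : cert :=
  [:: (1, [:: (4, 4, 15)%N]); (-1, [:: (1, 2, 1)%N; (1, 2, 2)%N; (1, 2, 4)%N; (1, 2, 8)%N])].
(* g_ij = 2: gamma_2(2(x_ix_j-1)) gamma_1(2(x_k-1)) gamma_1(2(x_l-1)). *)
Definition cert_top_pair (s : nat) : cert :=
  [:: (1, (2, 2, s)%N :: [seq (1, 2, t)%N | t <- [:: 1; 2; 4; 8]%N & ~~ msub t s])].
(* h_l = 2: gamma_2(2(x^{ijk}-1)) gamma_1(2(x_l-1)) gamma_1(2(x_i-1)), i != l. *)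
Definition cert_top_triple (l : nat) : cert :=
  [:: (1, [:: (2, 2, 15 - 2 ^ l)%N; (1, 2, 2 ^ l)%N; (1, 2, if l == 0%N then 2 else 1)%N])].
(* J_m in G, J_m = {{1, m+1}, {k, l}}:
   gamma_2(2(x_1x_{m+1}-1)) gamma_2(2(x_kx_l-1)) = 4 y_1 y_2 y_3 y_4. *)
Definition jmask (m : nat) : nat := (1 + 2 ^ m.+1)%N.
Definition cert_top_J (m : nat) : cert := [:: (1, [:: (2, 2, jmask m)%N; (2, 2, 15 - jmask m)%N])].

Definition check_top :=
  [&& cert_exact_ok 4 cert_top_total2 (ttop 8), cert_exact_ok 4 cert_top_total4 (ttop 8),
      all (fun s => if mcard s == 2%N then cert_exact_ok 4 (cert_top_pair s) (ttop 8) else true)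
        (iota 0 16),
      all (fun l => cert_exact_ok 4 (cert_top_triple l) (ttop 8)) (iota 0 4) &
      all (fun m => cert_exact_ok 4 (cert_top_J m) (ttop 4)) (iota 0 3)].
Lemma check_topP : check_top. Proof. by vm_compute. Qed.

(* J_m has at most two elements, so if G meets it in two pairs it contains J_m. *)
Lemma Jset_sub (G : {set {set 'I_4}}) (m : 'I_3) : #|G :&: Jset m| = 2%N -> Jset m \subset G.
Proof.
move=> cGJ; have /eqP <- : G :&: Jset m == Jset m.
  by rewrite eqEcard subsetIr cGJ /Jset cards2 ltnS leq_b1.
exact: subsetIl.
Qed.

Definition count_pairs (f A : nat -> bool) : int :=
  sum_masks (fun s => ((mcard s == 2%N) && f s && A s : nat)%:Z).

Lemma card_pairs_with (P : {set 'I_4} -> bool) (B : {set {set 'I_4}}) (A : nat -> bool) :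
  (forall s, (s < 16)%N -> (to_set s \in B) = A s) ->
  #|[set S : {set 'I_4} | (#|S| == 2)%N && P S] :&: B|%:Z = count_pairs (fun s => P (to_set s)) A.
Proof.
move=> BA; rewrite card_sets_masks; apply: eq_sum_list => s; rewrite mem_iota add0n => lts.
by rewrite !inE card_to_set BA.
Qed.

Lemma count_pairs_agree f g A : (forall s, (s < 16)%N -> mcard s == 2%N -> f s = g s) ->
  count_pairs f A = count_pairs g A.
Proof.
move=> fg; apply: eq_sum_list => s; rewrite mem_iota add0n => lts.
by case c2: (mcard s == 2%N); rewrite //= fg.
Qed.

(* A set of pairs coded by 6 bits, one for each of the pairs with masks 3, 5, 6, 9, 10, 12. *)
Definition pair_masks := [:: 3; 5; 6; 9; 10; 12]%N.
Definition coded_pairs (x s : nat) : bool := mbit (index s pair_masks) x.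
Definition pair_code (f : nat -> bool) : nat :=
  (f 3%N + 2 * f 5%N + 4 * f 6%N + 8 * f 9%N + 16 * f 10%N + 32 * f 12%N)%N.

Lemma pair_codeP f s : (s < 16)%N -> mcard s == 2%N -> f s = coded_pairs (pair_code f) s.
Proof.
rewrite /coded_pairs /pair_code; do 16?[case: s => [|s] //] => _ _ /=;
  by case: (f 3%N); case: (f 5%N); case: (f 6%N); case: (f 9%N); case: (f 10%N); case: (f 12%N).
Qed.

Lemma pair_code_lt f : (pair_code f < 64)%N.
Proof.
rewrite /pair_code.
by case: (f 3%N); case: (f 5%N); case: (f 6%N); case: (f 9%N); case: (f 10%N); case: (f 12%N).
Qed.

(* The hypotheses on G of (2), and their conclusion, on the 64 sets of pairs. *)
Definition inJ (m s : nat) : bool := meq s (jmask m) || meq s (15 - jmask m).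
Definition inK (i s : nat) : bool := (mcard s == 2%N) && ~~ mbit i s.
Definition G_hyp (f : nat -> bool) : bool :=
  [|| 4 <= count_pairs f predT, has (fun m => count_pairs f (inJ m) == 2) (iota 0 3)
    | has (fun i => count_pairs f (inK i) == 3) (iota 0 4)].
Definition pair_cover_check := all (fun x => if G_hyp (coded_pairs x) then
  forall4 (fun p q r _ => if (p < q < r)%N then
    [|| coded_pairs x (2 ^ p + 2 ^ q), coded_pairs x (2 ^ p + 2 ^ r)
      | coded_pairs x (2 ^ q + 2 ^ r)] else true) else true) (iota 0 64).
Lemma pair_cover_checkP : pair_cover_check. Proof. by vm_compute. Qed.

Lemma mem_Jset_mask (m : 'I_3) s : (s < 16)%N -> (to_set s \in Jset m) = inJ m s.
Proof.
move=> lts; have ltj : (jmask m < 16)%N by case: m => [[|[|[|//]]] ?].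
rewrite !inE set2_mask ?neq_lift // setC_mask; last by rewrite lift0 expn0.
by rewrite lift0 expn0 !eq_to_set.
Qed.

Lemma pair_mask (p q : 'I_4) : (p < q)%N ->
  [/\ [set p; q] = to_set (2 ^ p + 2 ^ q), mcard (2 ^ p + 2 ^ q) == 2%N & (2 ^ p + 2 ^ q < 16)%N].
Proof.
move=> pq; rewrite set2_mask ?neq_ltn ?pq //; split => //;
  by move: pq; case: (ord4_cases p) => ->; case: (ord4_cases q) => ->.
Qed.

Lemma pair_in_every_triple (P : {set 'I_4} -> bool) :
  let G := [set S : {set 'I_4} | (#|S| == 2)%N && P S] in
  (4 <= #|G|)%N \/ (exists m : 'I_3, #|G :&: Jset m| = 2%N)
    \/ (exists i : 'I_4, #|G :&: Kset i| = 3%N) ->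
  forall p q r : 'I_4, (p < q)%N -> (q < r)%N -> [|| P [set p; q], P [set p; r] | P [set q; r]].
Proof.
move=> G hyp p q r pq qr.
pose f s := P (to_set s); pose x := pair_code f.
have agree A : count_pairs f A = count_pairs (coded_pairs x) A.
  by apply: count_pairs_agree => s; apply: pair_codeP.
have hypx : G_hyp (coded_pairs x).
  case: hyp => [c4 | [[m cm] | [i ci]]]; rewrite /G_hyp.
  - have := card_pairs_with P (A := predT) (fun s _ => in_setT (to_set s)).
    by rewrite setIT -agree => <-; rewrite lez_nat c4.
  - apply/or3P; apply: Or32; apply/hasP; exists (m : nat); first by rewrite mem_iota ltn_ord.
    by rewrite -agree -(card_pairs_with P (mem_Jset_mask m)) cm.
  - apply/or3P; apply: Or33; apply/hasP; exists (i : nat); first by rewrite mem_iota ltn_ord.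
    have Ki s : (s < 16)%N -> (to_set s \in Kset i) = inK i s.
      by rewrite inE card_to_set in_to_set.
    by rewrite -agree -(card_pairs_with P Ki) ci.
have := allP pair_cover_checkP x; rewrite mem_iota pair_code_lt hypx => /(_ isT).
move=> /forall4P/(_ p q r p); rewrite pq qr /=.
have coded (a b : 'I_4) : (a < b)%N -> coded_pairs x (2 ^ a + 2 ^ b) = P [set a; b].
  by move=> ab; have [-> c2 lt16] := pair_mask ab; rewrite -pair_codeP.
by rewrite !coded // (ltn_trans pq qr).
Qed.

Section Certified.
Variable ind : {set 'I_4} -> nat.
Hypothesis ind0 : ind set0 = 1%N.
Hypothesis ind1 : forall i : 'I_4, ind [set i] = 2%N.

Lemma ind_mask1 (x : 'I_4) : ind (to_set (2 ^ x)) = 2%N.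
Proof. by rewrite -set1_mask. Qed.

Lemma ind_masks1 : [/\ ind (to_set 1) = 2%N, ind (to_set 2) = 2%N,
                       ind (to_set 4) = 2%N & ind (to_set 8) = 2%N].
Proof.
by split; [exact: (ind_mask1 o0) | exact: (ind_mask1 o1) | exact: (ind_mask1 o2)
          | exact: (ind_mask1 o3)].
Qed.

(* (1), d = 2:  gamma_2(2(x_1x_2x_3x_4 - 1)) = 2 sum_{p<q} y_p y_q + higher terms. *)
Lemma total_pairs : didx ind = 2%N ->
  inImRes ind 2 ((\sum_(p < 4) \sum_(q < 4 | (p < q)%N) ymon [set p; q]) *~ 2).
Proof.
move=> d2; apply: (inImRes_cert (w := cert_gamma2 15) ind0 _ _ check_total_pairsP).
- by split => //; rewrite -setT_mask.
- exact: Encodes_scale Encodes_pairs.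
Qed.

(* (1), h_l = 2:  gamma_2(2(x_ix_jx_k - 1)) = 2(y_iy_j + y_iy_k + y_jy_k) + higher terms. *)
Lemma triple_class_pairs (i j k l : 'I_4) : uniq [:: i; j; k; l] -> hidx ind l = 2%N ->
  inImRes ind 2 ((ymon [set i; j] + ymon [set i; k] + ymon [set j; k]) *~ 2).
Proof.
move=> u hl; have [ij ik _ [jk _ _]] := uniq4E u.
rewrite !set2_mask //; apply: (inImRes_cert (w := cert_gamma2 (15 - 2 ^ l)) ind0).
- by split => //; rewrite -setC1_mask.
- by apply: Encodes_scale; apply: Encodes_add; [apply: Encodes_add|]; apply: Encodes_ymon.
- by have := forall4P check_triple_classP i j k l; rewrite uniq4_val u => /and3P [].
Qed.

(* (2), g_ab = 2:  gamma_2(2(x_ax_b - 1)) gamma_1(2(x_c - 1)) = 4 y_ay_by_c + higher terms. *)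
Lemma pair_triple (a b c : 'I_4) : a != b -> a != c -> b != c -> ind [set a; b] = 2%N ->
  inImRes ind 3 (ymon [set a; b; c] *~ 4).
Proof.
move=> ab ac bc gab; rewrite set3_mask //.
apply: (inImRes_cert (w := cert_pair_triple a b c) ind0).
- by split; [rewrite -set2_mask | split; first exact: ind_mask1].
- exact: Encodes_scale (Encodes_ymon _).
- by have := forall4P check_pair_tripleP a b c a; rewrite ab ac bc.
Qed.

Lemma some_pair_triple (p q r : 'I_4) : p != q -> p != r -> q != r ->
  [|| ind [set p; q] == 2%N, ind [set p; r] == 2%N | ind [set q; r] == 2%N] ->
  inImRes ind 3 (ymon [set p; q; r] *~ 4).
Proof.
move=> pq pr qr /or3P [] /eqP g.
- exact: pair_triple.
- by rewrite setUAC; apply: pair_triple => //; rewrite eq_sym.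
- have -> : [set p; q; r] = [set q; r; p].
    by apply/setP => x; rewrite !inE; case: (x == p); case: (x == q); case: (x == r).
  by apply: pair_triple => //; rewrite eq_sym.
Qed.

(* (2), h_l = 2:  gamma_2(2(x_ix_jx_k - 1)) gamma_1(2(x_i - 1)) = 4 y_iy_jy_k + ...,
   and with gamma_1(2(x_l - 1)) instead, -4 y_iy_jy_k + 4 sum_{p<q<r} y_py_qy_r + ... *)
Lemma triple_class_triples (i j k l : 'I_4) : uniq [:: i; j; k; l] -> hidx ind l = 2%N ->
  inImRes ind 3 (ymon [set i; j; k] *~ 4)
  /\ inImRes ind 3 (ymon [set i; j; k] *~ (-4) +
       (\sum_(p < 4) \sum_(q < 4 | (p < q)%N) \sum_(r < 4 | (q < r)%N)
           ymon [set p; q; r]) *~ 4).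
Proof.
move=> u hl; have [ij ik _ [jk _ _]] := uniq4E u.
have hl' : ind (to_set (15 - 2 ^ l)) = 2%N by rewrite -setC1_mask.
have checks := forall4P check_triple_classP i j k l; rewrite uniq4_val u in checks.
rewrite !set3_mask //; split.
- apply: (inImRes_cert (w := cert_triple_lin (15 - 2 ^ l) i) ind0).
  + by split => //; split; first exact: ind_mask1.
  + exact: Encodes_scale (Encodes_ymon _).
  + by case/and3P: checks.
- apply: (inImRes_cert (w := cert_triple_lin (15 - 2 ^ l) l) ind0).
  + by split => //; split; first exact: ind_mask1.
  + by apply: Encodes_add; apply: Encodes_scale; [exact: Encodes_ymon | exact: Encodes_triples].
  + by case/and3P: checks.
Qed.

Lemma total_triple (p q r : 'I_4) : didx ind = 2%N -> (p < q)%N -> (q < r)%N ->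
  inImRes ind 3 (ymon [set p; q; r] *~ 4).
Proof.
move=> d2 pq qr; have pr := ltn_trans pq qr.
have [i1 i2 i4 i8] := ind_masks1.
rewrite set3_mask ?neq_ltn ?pq ?pr ?qr //.
apply: (inImRes_cert (w := cert_total_triple p q r) ind0).
- by rewrite /cert_indices /fmult /fmask /= !ind_mask1 i1 i2 i4 i8 -setT_mask -/(didx ind) d2.
- exact: Encodes_scale (Encodes_ymon _).
- by have := forall4P check_total_tripleP p q r p; rewrite pq qr.
Qed.

(* (2): 4 y_py_qy_r for every triple, under the hypotheses on G (which force
   every triple to contain a pair of index 2). *)
Lemma G_triple : (4 <= #|Gset ind|)%N \/ (exists m : 'I_3, #|Gset ind :&: Jset m| = 2%N)
    \/ (exists i : 'I_4, #|Gset ind :&: Kset i| = 3%N) ->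
  forall p q r : 'I_4, (p < q)%N -> (q < r)%N -> inImRes ind 3 (ymon [set p; q; r] *~ 4).
Proof.
move=> hyp p q r pq qr; have pr := ltn_trans pq qr.
apply: some_pair_triple; rewrite ?neq_ltn ?pq ?pr ?qr //.
exact: (pair_in_every_triple hyp).
Qed.

Lemma top_cert (c : int) w : cert_indices ind w -> cert_exact_ok 4 w (ttop c) ->
  GammaX ind 4 (ymon [set: 'I_4] *~ c).
Proof.
move=> Hi ok; rewrite setT_mask.
exact: (GammaX_cert ind0 Hi (Encodes_scale _ (Encodes_ymon _)) ok).
Qed.

Lemma top_total : didx ind = 2%N \/ didx ind = 4%N -> GammaX ind 4 (ymon [set: 'I_4] *~ 8).
Proof.
have [i1 i2 i4 i8] := ind_masks1.
case=> d; [apply: (top_cert (w := cert_top_total2)) | apply: (top_cert (w := cert_top_total4))];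
  try by rewrite /cert_indices /fmult /fmask /= i1 i2 ?i4 ?i8 -setT_mask -/(didx ind) d.
- by have /and5P [] := check_topP.
- by have /and5P [] := check_topP.
Qed.

Lemma top_pair : (1 <= #|Gset ind|)%N -> GammaX ind 4 (ymon [set: 'I_4] *~ 8).
Proof.
case/card_gt0P => S; rewrite inE => /andP [/eqP cS /eqP gS].
have [i1 i2 i4 i8] := ind_masks1.
move: cS gS; rewrite -(to_maskK S) card_to_set.
move: (to_mask_lt S); move: (to_mask S) => s lts cs gs.
apply: (top_cert (w := cert_top_pair s)).
  by move: lts cs gs; do 16?[case: s => [|s] //] => _ _ gs;
    rewrite /cert_indices /fmult /fmask /= gs ?i1 ?i2 ?i4 ?i8.
have /and5P [_ _ /allP/(_ s) okG _ _] := check_topP.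
by move: okG; rewrite mem_iota lts cs eqxx => /(_ isT).
Qed.

Lemma top_triple : (1 <= #|Hset ind 2|)%N -> GammaX ind 4 (ymon [set: 'I_4] *~ 8).
Proof.
case/card_gt0P => l; rewrite inE => /eqP hl.
apply: (top_cert (w := cert_top_triple l)).
  rewrite /cert_indices /fmult /fmask /= -setC1_mask -/(hidx ind l) hl ind_mask1.
  by case: (nat_of_ord l == 0%N); [rewrite (ind_mask1 o1) | rewrite (ind_mask1 o0)].
have /and5P [_ _ _ /allP/(_ l) okH _] := check_topP.
by move: okH; rewrite mem_iota ltn_ord => /(_ isT).
Qed.

Lemma top_J (m : 'I_3) : Jset m \subset Gset ind -> GammaX ind 4 (ymon [set: 'I_4] *~ 4).
Proof.
move=> /subsetP JG.
have /JG : [set ord0; lift ord0 m] \in Jset m by rewrite /Jset set21.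
have /JG : ~: [set ord0; lift ord0 m] \in Jset m by rewrite /Jset set22.
rewrite !inE => /andP [_ /eqP g2] /andP [_ /eqP g1].
apply: (top_cert (w := cert_top_J m)).
  have J1 : [set ord0; lift ord0 m] = to_set (jmask m) by rewrite set2_mask ?neq_lift // lift0.
  rewrite /cert_indices /fmult /fmask /= -J1 g1 -setC_mask ?g2 -?J1 //.
  by case: m {J1 g1 g2 JG} => [[|[|[|//]]] ?].
have /and5P [_ _ _ _ /allP/(_ m) okJ] := check_topP.
by move: okJ; rewrite mem_iota ltn_ord => /(_ isT).
Qed.
End Certified.

Theorem lemma4p5 (ind : {set 'I_4} -> nat)
  (Hq : quat_indices ind)
  (Hg : forall i j : 'I_4, i != j -> (2 <= gidx ind i j)%N)
  (Hh : forall i : 'I_4, (2 <= hidx ind i)%N)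
  (Hd : (2 <= didx ind)%N) :
  (* (1) *)
  ( (didx ind = 2%N ->
       inImRes ind 2 ((\sum_(p < 4) \sum_(q < 4 | (p < q)%N) ymon [set p; q]) *~ 2))
    /\ (forall i j k l : 'I_4, uniq [:: i; j; k; l] -> hidx ind l = 2%N ->
       inImRes ind 2 ((ymon [set i; j] + ymon [set i; k] + ymon [set j; k]) *~ 2)) )
  /\
  (* (2) *)
  ( (forall i j k l : 'I_4, uniq [:: i; j; k; l] -> gidx ind i j = 2%N ->
       inImRes ind 3 (ymon [set i; j; k] *~ 4) /\ inImRes ind 3 (ymon [set i; j; l] *~ 4))
    /\ (forall i j k l : 'I_4, uniq [:: i; j; k; l] -> hidx ind l = 2%N ->
       inImRes ind 3 (ymon [set i; j; k] *~ 4)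
       /\ inImRes ind 3 (ymon [set i; j; k] *~ (-4) +
            (\sum_(p < 4) \sum_(q < 4 | (p < q)%N) \sum_(r < 4 | (q < r)%N)
                ymon [set p; q; r]) *~ 4))
    /\ (forall i j k l : 'I_4, uniq [:: i; j; k; l] ->
          gidx ind i j = 2%N -> gidx ind i k = 2%N ->
       [/\ inImRes ind 3 (ymon [set i; j; k] *~ 4),
           inImRes ind 3 (ymon [set i; j; l] *~ 4) &
           inImRes ind 3 (ymon [set i; k; l] *~ 4)])
    /\ ( (didx ind = 2%N \/ (4 <= #|Gset ind|)%N
          \/ (exists m : 'I_3, #|Gset ind :&: Jset m| = 2%N)
          \/ (exists i : 'I_4, #|Gset ind :&: Kset i| = 3%N)) ->
       forall p q r : 'I_4, (p < q)%N -> (q < r)%N ->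
         inImRes ind 3 (ymon [set p; q; r] *~ 4)) )
  /\
  (* (3) *)
  ( ( (didx ind = 2%N \/ didx ind = 4%N \/ (1 <= #|Gset ind|)%N
         \/ (1 <= #|Hset ind 2|)%N) ->
       GammaX ind 4 (ymon [set: 'I_4] *~ 8))
    /\ ( (exists m : 'I_3, #|Gset ind :&: Jset m| = 2%N) ->
       GammaX ind 4 (ymon [set: 'I_4] *~ 4)) ).
Proof.
have [ind0 ind1 _] := Hq.
split; [split | split; [split; [|split; [|split]] | split]].
- exact: total_pairs.
- exact: triple_class_pairs.
- move=> i j k l u gij; have [ij ik il [jk jl kl]] := uniq4E u.
  by split; apply: pair_triple.
- exact: triple_class_triples.
- move=> i j k l u gij gik; have [ij ik il [jk jl kl]] := uniq4E u.
  by split; apply: pair_triple.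
- case=> [d2 p q r | hypG]; [exact: total_triple | exact: G_triple].
- case=> [d | [d | [g | h]]];
    by [apply: (top_total ind0 ind1); left | apply: (top_total ind0 ind1); right
       | exact: top_pair | exact: top_triple].
- by case=> m /Jset_sub; apply: top_J.
Qed.
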